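(* Let $(p_i)_{i\ge0}$ be an offspring distribution with mean $\kappa=\sum_i ip_i<1$, $p_0>0$, and $p_i=\tilde L(i)\,i^{-\beta}$ for $i\ge1$, where $\beta>2$ and $\tilde L$ is slowly varying. Let $N$ be the total number of vertices and $N^{(0)}$ the number of leaves of a Galton–Watson tree with offspring distribution $(p_i)$. Then, as $n\to\infty$, $$\mathbb P\big(|N^{(0)}-p_0N|\ge n\big)=o\big(\tilde L(n)n^{1-\beta}\big)=o(np_n)=o\big(\mathbb P(N\ge n)\big).$$ *)

From Stdlib Require Import Reals List.
Import ListNotations.
Open Scope R_scope.

(* Finite rooted plane (ordered) trees. *)
Inductive ptree : Type := Node : list ptree -> ptree.

Fixpoint tsize (t : ptree) : nat :=
  match t with
  | Node ts =>
      S ((fix go (l : list ptree) : nat :=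
            match l with [] => 0%nat | u :: l' => (tsize u + go l')%nat end) ts)
  end.

Fixpoint tleaves (t : ptree) : nat :=
  match t with
  | Node [] => 1%nat
  | Node ts =>
      (fix go (l : list ptree) : nat :=
         match l with [] => 0%nat | u :: l' => (tleaves u + go l')%nat end) ts
  end.

Fixpoint gw_weight (p : nat -> R) (t : ptree) : R :=
  match t with
  | Node ts =>
      p (length ts) *
      (fix go (l : list ptree) : R :=
         match l with [] => 1 | u :: l' => gw_weight p u * go l' end) ts
  end.

(* [gw_prob p E l] : l is the probability that the Galton-Watson tree with
   offspring distribution p is a finite tree satisfying E, i.e. l is the sum
   of gw_weight p t over all finite plane trees t with E t (supremum of
   finite partial sums over distinct trees). *)
Definition gw_prob (p : nat -> R) (E : ptree -> Prop) (l : R) : Prop :=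
  is_lub (fun s => exists L : list ptree,
             NoDup L /\ Forall E L /\
             s = fold_right (fun t a => gw_weight p t + a) 0 L) l.

Definition slowly_varying_seq (L : nat -> R) : Prop :=
  (forall n : nat, (1 <= n)%nat -> 0 < L n) /\
  forall lam : R, 0 < lam ->
    Un_cv (fun n => L (Z.to_nat (Int_part (lam * INR n))) / L n) 1.

Definition little_o (f g : nat -> R) : Prop :=
  forall eps : R, 0 < eps -> exists N : nat, forall n : nat, (N <= n)%nat ->
    Rabs (f n) <= eps * Rabs (g n).

From Stdlib Require Import Reals List Lra Lia Psatz ClassicalEpsilon ZArith.
Import ListNotations.
Open Scope R_scope.

(* Write N(t) for the size, D(t) = #leaves(t) - p_0 N(t) for the centred leaf
   count, and w(t) for the Galton-Watson weight of a finite plane tree t.  The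
   theorem compares two polynomial rates.
   - Upper bound: P(|D| >= x) = O(x^(-(2-2e)(beta-1-e))).  The event is split
     according to (i) some vertex has degree > B = x^(2-2e), bounded by a first
     moment E[#vertices of degree > B] <= P(xi > B)/(1-kappa); (ii) all degrees
     are <= B but N >= m = x^(2-e), a Chernoff bound for the size under the
     truncated law; (iii)-(iv) N < m and +-D >= x, bounded through the
     exponential supermartingale exp(th D - 2 th^2 N) (Hoeffding).
   - Lower bound: P(N >= n) >= p_n / 2 (a root with n small subtrees), and
     p_n, n p_n = L(n) n^(1-beta) are all >= c n^(-(beta+e)) by Potter's bounds.
   For e small the upper exponent beats the lower one, which gives the three
   little-o statements.

   Probabilities are suprema of sums of w over finite sets of trees, so the
   moment bounds are proved for every finite set of trees, by induction through
   the decomposition of a tree into its root degree and its subtrees: the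
   trees with root degree k and subtrees from a set C have total weight
   p_k (sum of w over C)^k. *)

Definition sumL {A} (f : A -> R) (l : list A) : R := fold_right (fun x s => f x + s) 0 l.
Definition prodL {A} (f : A -> R) (l : list A) : R := fold_right (fun x s => f x * s) 1 l.
Definition psum (a : nat -> R) (K : nat) : R := sumL a (seq 0 K).

Section ListSums.
Context {A : Type}.
Implicit Types (f g : A -> R) (l : list A).

Lemma sumL_app f l1 l2 : sumL f (l1 ++ l2) = sumL f l1 + sumL f l2.
Proof. induction l1 as [|x l1 IH]; simpl; [lra|]. unfold sumL in *; simpl; rewrite IH; lra. Qed.

Lemma sumL_nonneg f l : (forall x, In x l -> 0 <= f x) -> 0 <= sumL f l.
Proof.
  intros Hf; induction l as [|x l IH]; simpl; [lra|].
  assert (0 <= f x) by (apply Hf; left; auto).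
  specialize (IH (fun y Hy => Hf y (or_intror Hy))). unfold sumL in *; simpl; lra.
Qed.

Lemma sumL_le f g l : (forall x, In x l -> f x <= g x) -> sumL f l <= sumL g l.
Proof.
  induction l as [|x l IH]; simpl; intros H; [lra|]. unfold sumL in *; simpl.
  assert (f x <= g x) by auto. specialize (IH (fun y Hy => H y (or_intror Hy))). lra.
Qed.

Lemma sumL_ext f g l : (forall x, In x l -> f x = g x) -> sumL f l = sumL g l.
Proof. intros H; apply Rle_antisym; apply sumL_le; intros x Hx; rewrite H by auto; lra. Qed.

Lemma sumL_plus f g l : sumL (fun x => f x + g x) l = sumL f l + sumL g l.
Proof. induction l as [|x l IH]; simpl; [lra|]. unfold sumL in *; simpl; rewrite IH; lra. Qed.

Lemma sumL_scal f c l : sumL (fun x => c * f x) l = c * sumL f l.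
Proof. induction l as [|x l IH]; simpl; [lra|]. unfold sumL in *; simpl; rewrite IH; lra. Qed.

Lemma prodL_nonneg f l : (forall x, 0 <= f x) -> 0 <= prodL f l.
Proof. intros Hf; induction l as [|x l IH]; simpl; [lra|]. apply Rmult_le_pos; auto. Qed.

Lemma sumL_incl f (L E : list A) :
  (forall x, 0 <= f x) -> NoDup L -> incl L E -> sumL f L <= sumL f E.
Proof.
  intros Hf HL; revert E; induction HL as [|a L' Ha HL IH]; intros E HI.
  - apply sumL_nonneg; auto.
  - assert (Hin : In a E) by (apply HI; left; auto).
    destruct (in_split _ _ Hin) as [E1 [E2 ->]].
    assert (IH' : sumL f L' <= sumL f (E1 ++ E2)).
    { apply IH. intros x Hx.
      assert (Hx' : In x (E1 ++ a :: E2)) by (apply HI; right; auto).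
      apply in_app_or in Hx'. apply in_or_app.
      destruct Hx' as [H|[H|H]]; auto. subst; contradiction. }
    rewrite sumL_app in *. change (f a + sumL f L' <= sumL f E1 + (f a + sumL f E2)). lra.
Qed.

End ListSums.

Lemma sumL_flat_map {A B} (f : B -> R) (g : A -> list B) l :
  sumL f (flat_map g l) = sumL (fun x => sumL f (g x)) l.
Proof. induction l as [|x l IH]; simpl; auto. rewrite sumL_app, IH; reflexivity. Qed.

Lemma sumL_map {A B} (f : B -> R) (h : A -> B) l : sumL f (map h l) = sumL (fun x => f (h x)) l.
Proof. induction l as [|x l IH]; simpl; auto. unfold sumL in *; simpl; rewrite IH; auto. Qed.

Lemma map_inj_NoDup {A B} (f : A -> B) l :
  (forall x y, f x = f y -> x = y) -> NoDup l -> NoDup (map f l).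
Proof.
  intros Hf H; induction H as [|x l Hx H IH]; simpl; constructor; auto.
  intro Hin. apply in_map_iff in Hin. destruct Hin as [y [E Hy]].
  apply Hf in E; subst; contradiction.
Qed.

Lemma psum_S a K : psum a (S K) = psum a K + a K.
Proof. unfold psum; rewrite seq_S, sumL_app; simpl. lra. Qed.

Lemma psum_shift a K : psum a (S K) = a 0%nat + psum (fun k => a (S k)) K.
Proof. unfold psum. simpl. f_equal. rewrite <- seq_shift, sumL_map. auto. Qed.

Lemma psum_le a b K : (forall k, a k <= b k) -> psum a K <= psum b K.
Proof. intros; apply sumL_le; auto. Qed.

Lemma psum_ext a b K : (forall k, a k = b k) -> psum a K = psum b K.
Proof. intros H; apply sumL_ext; auto. Qed.

Lemma psum_plus a b K : psum (fun k => a k + b k) K = psum a K + psum b K.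
Proof. apply sumL_plus. Qed.

Lemma psum_scal a c K : psum (fun k => c * a k) K = c * psum a K.
Proof. apply sumL_scal. Qed.

Lemma sum_f_R0_psum a n : sum_f_R0 a n = psum a (S n).
Proof.
  induction n as [|n IH]; simpl; [unfold psum; simpl; lra|]. rewrite IH, (psum_S a (S n)). reflexivity.
Qed.

Lemma psum_le_inf a l : (forall k, 0 <= a k) -> infinite_sum a l -> forall K, psum a K <= l.
Proof.
  intros Ha Hs K.
  assert (Hg : Un_growing (sum_f_R0 a)) by (intros n; simpl; specialize (Ha (S n)); lra).
  destruct K as [|K].
  - pose proof (growing_ineq _ _ Hg Hs 0). specialize (Ha 0%nat).
    unfold psum; simpl in *. lra.
  - rewrite <- sum_f_R0_psum. apply growing_ineq; auto.
Qed.

(* Every quantity below is an additive functional of the tree: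
   [vsum g t] is the sum, over the vertices of [t], of [g] applied to the
   number of children; vertices and leaves are the cases [g = 1] and
   [g = indicator of 0]. *)

Lemma ptree_ind2 (P : ptree -> Prop)
  (H : forall ts, (forall u, In u ts -> P u) -> P (Node ts)) : forall t, P t.
Proof.
  fix F 1. intros [ts]. apply H.
  induction ts as [|a ts IH]; intros u Hu.
  - destruct Hu.
  - destruct Hu as [<-|Hu]; [apply F | exact (IH u Hu)].
Qed.

Definition children (t : ptree) : list ptree := match t with Node ts => ts end.

Lemma tsize_node ts : tsize (Node ts) = S (fold_right (fun u a => (tsize u + a)%nat) 0%nat ts).
Proof. simpl. f_equal; induction ts; simpl; auto. Qed.

Lemma tsize_pos t : (1 <= tsize t)%nat.
Proof. destruct t; rewrite tsize_node; lia. Qed.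

Lemma tsize_child ts u : In u ts -> (tsize u < tsize (Node ts))%nat.
Proof.
  rewrite tsize_node. induction ts as [|a ts IH]; simpl; [tauto|].
  intros [->|H]; [lia|]. specialize (IH H); lia.
Qed.

Lemma tsize_ge_len ts : (length ts < tsize (Node ts))%nat.
Proof. rewrite tsize_node. induction ts as [|a ts IH]; simpl; [lia|]. pose proof (tsize_pos a). lia. Qed.

Lemma INR_tsize_node ts : INR (tsize (Node ts)) = 1 + sumL (fun u => INR (tsize u)) ts.
Proof.
  rewrite tsize_node, S_INR, Rplus_comm. f_equal.
  induction ts as [|a ts IH]; simpl; [reflexivity|]. rewrite plus_INR, IH. reflexivity.
Qed.

Definition ind0 (k : nat) : R := match k with O => 1 | _ => 0 end.

Lemma tleaves_node ts : INR (tleaves (Node ts)) = ind0 (length ts) + sumL (fun u => INR (tleaves u)) ts.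
Proof.
  destruct ts as [|a ts]; [simpl; unfold sumL; simpl; lra|].
  change (INR (tleaves a + (fix go (l : list ptree) : nat :=
            match l with [] => 0%nat | u :: l' => (tleaves u + go l')%nat end) ts)%nat
          = 0 + sumL (fun u => INR (tleaves u)) (a :: ts)).
  revert a; induction ts as [|b ts IH]; intros a; simpl.
  - unfold sumL; simpl. rewrite plus_INR; simpl; lra.
  - rewrite plus_INR, (IH b). unfold sumL; simpl; lra.
Qed.

Lemma gw_weight_node q ts : gw_weight q (Node ts) = q (length ts) * prodL (gw_weight q) ts.
Proof. reflexivity. Qed.

Lemma gw_weight_nonneg q t : (forall k, 0 <= q k) -> 0 <= gw_weight q t.
Proof.
  intros Hq. induction t as [ts IH] using ptree_ind2. rewrite gw_weight_node.
  apply Rmult_le_pos; auto. clear Hq. induction ts as [|a ts IHts]; unfold prodL; simpl; [lra|].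
  apply Rmult_le_pos; [apply IH; left; auto | apply IHts; intros; apply IH; right; auto].
Qed.

Fixpoint vsum (g : nat -> R) (t : ptree) : R :=
  match t with Node ts => g (length ts) +
    (fix go (l : list ptree) : R := match l with [] => 0 | u :: l' => vsum g u + go l' end) ts end.

Lemma vsum_node g ts : vsum g (Node ts) = g (length ts) + sumL (vsum g) ts.
Proof. reflexivity. Qed.

Lemma vsum_lin g1 g2 a b t : vsum (fun k => a * g1 k + b * g2 k) t = a * vsum g1 t + b * vsum g2 t.
Proof.
  induction t as [ts IH] using ptree_ind2. rewrite !vsum_node.
  rewrite (sumL_ext _ (fun u => a * vsum g1 u + b * vsum g2 u)) by auto.
  rewrite sumL_plus, !sumL_scal. lra.
Qed.

Lemma vsum_ext g1 g2 t : (forall k, g1 k = g2 k) -> vsum g1 t = vsum g2 t.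
Proof.
  intros H. induction t as [ts IH] using ptree_ind2. rewrite !vsum_node, H.
  f_equal. apply sumL_ext; auto.
Qed.

Lemma vsum_nonneg g t : (forall k, 0 <= g k) -> 0 <= vsum g t.
Proof.
  intros H. induction t as [ts IH] using ptree_ind2. rewrite vsum_node.
  pose proof (H (length ts)). pose proof (sumL_nonneg (vsum g) ts IH). lra.
Qed.

Lemma vsum_size t : vsum (fun _ => 1) t = INR (tsize t).
Proof.
  induction t as [ts IH] using ptree_ind2. rewrite vsum_node, INR_tsize_node.
  f_equal. apply sumL_ext; auto.
Qed.

Lemma vsum_leaves t : vsum ind0 t = INR (tleaves t).
Proof.
  induction t as [ts IH] using ptree_ind2. rewrite vsum_node, tleaves_node.
  f_equal. apply sumL_ext; auto.
Qed.

Lemma vsum_const c t : vsum (fun _ => c) t = c * INR (tsize t).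
Proof.
  rewrite (vsum_ext _ (fun k => c * 1 + 0 * 1)) by (intros; ring).
  rewrite vsum_lin, vsum_size. ring.
Qed.

Lemma vsum_deviation th p0 t :
  vsum (fun k => th * (ind0 k - p0) - 2 * th ^ 2) t =
  th * (INR (tleaves t) - p0 * INR (tsize t)) - 2 * th ^ 2 * INR (tsize t).
Proof.
  rewrite (vsum_ext _ (fun k => th * ind0 k + (- (th * p0) - 2 * th ^ 2) * 1)) by (intros; ring).
  rewrite vsum_lin, vsum_leaves, vsum_size. ring.
Qed.

(* Any finite set [L] of trees is contained in [cover (allch L) K]
   for large [K], where [allch L] collects the children of the roots of [L];
   since these are strictly smaller trees, bounds on sums over finite sets of
   trees can be proved by induction through [cover]. *)

Fixpoint tuples {A} (C : list A) (k : nat) : list (list A) :=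
  match k with O => [[]] | S k' => flat_map (fun x => map (cons x) (tuples C k')) C end.

Lemma tuples_in {A} (C : list A) ts : (forall u, In u ts -> In u C) -> In ts (tuples C (length ts)).
Proof.
  induction ts as [|a ts IH]; simpl; intros H; auto.
  apply in_flat_map. exists a; split; auto. apply in_map. auto.
Qed.

Lemma tuples_len {A} (C : list A) k ts : In ts (tuples C k) -> length ts = k.
Proof.
  revert ts; induction k as [|k IH]; simpl; intros ts H; [destruct H as [<-|[]]; auto|].
  apply in_flat_map in H. destruct H as [x [_ H]]. apply in_map_iff in H.
  destruct H as [y [<- H]]. simpl; f_equal; auto.
Qed.

Lemma tuples_NoDup {A} (C : list A) k : NoDup C -> NoDup (tuples C k).
Proof.
  intros HC. induction k as [|k IH]; simpl; [repeat constructor; auto|].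
  generalize (tuples C k) IH. clear IH. intros T HT.
  induction HC as [|c C Hc HC IHC]; simpl; [constructor|]. apply NoDup_app.
  - apply map_inj_NoDup; auto. intros a b H; injection H; auto.
  - auto.
  - intros l Hl Hl'. apply in_map_iff in Hl. destruct Hl as [y [<- _]].
    apply in_flat_map in Hl'. destruct Hl' as [z [Hz Hz']].
    apply in_map_iff in Hz'. destruct Hz' as [w [E _]].
    injection E; intros; subst. contradiction.
Qed.

Lemma tuples_prod {A} (C : list A) (h : A -> R) k :
  sumL (prodL h) (tuples C k) = (sumL h C) ^ k.
Proof.
  induction k as [|k IH]; simpl; [unfold sumL, prodL; simpl; lra|].
  rewrite sumL_flat_map, (Rmult_comm (sumL h C)), <- sumL_scal.
  apply sumL_ext. intros x _. rewrite sumL_map, <- IH, (Rmult_comm _ (h x)), <- sumL_scal.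
  reflexivity.
Qed.

Lemma pow_le1 x n : 0 <= x <= 1 -> x ^ n <= 1.
Proof. intros H. rewrite <- (pow1 n). apply pow_incr. exact H. Qed.

Lemma tuples_additive {A} (C : list A) (w a : A -> R) (MA : R) k :
  (forall u, 0 <= w u) -> (forall u, 0 <= a u) -> sumL w C <= 1 ->
  sumL (fun u => w u * a u) C <= MA ->
  sumL (fun ts => prodL w ts * sumL a ts) (tuples C k) <= INR k * MA.
Proof.
  intros Hw Ha HW HM.
  assert (HW0 : 0 <= sumL w C) by (apply sumL_nonneg; auto).
  assert (HMA : 0 <= MA).
  { eapply Rle_trans; [|apply HM]. apply sumL_nonneg. intros; apply Rmult_le_pos; auto. }
  induction k as [|k IH]; cbn [tuples]; [unfold sumL, prodL; simpl; lra|].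
  set (S0 := sumL (prodL w) (tuples C k)).
  set (S1 := sumL (fun ts => prodL w ts * sumL a ts) (tuples C k)).
  rewrite sumL_flat_map.
  rewrite (sumL_ext _ (fun x => S0 * (w x * a x) + S1 * w x)).
  - rewrite sumL_plus, !sumL_scal.
    assert (HS0 : 0 <= S0 <= 1) by (unfold S0; rewrite tuples_prod; split;
                                   [apply pow_le | apply pow_le1]; lra).
    assert (0 <= sumL (fun u => w u * a u) C) by (apply sumL_nonneg; intros; apply Rmult_le_pos; auto).
    assert (HS1 : 0 <= S1).
    { apply sumL_nonneg. intros ts _. apply Rmult_le_pos; [apply prodL_nonneg | apply sumL_nonneg]; auto. }
    fold S1 in IH. clearbody S0 S1. rewrite S_INR. nra.
  - intros x _. rewrite sumL_map.
    rewrite (sumL_ext _ (fun ts => (w x * a x) * prodL w ts + w x * (prodL w ts * sumL a ts))).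
    + rewrite sumL_plus, !sumL_scal. unfold S0, S1. ring.
    + intros ts _. change (w x * prodL w ts * (a x + sumL a ts)
                           = w x * a x * prodL w ts + w x * (prodL w ts * sumL a ts)). ring.
Qed.

Definition ptree_dec : forall x y : ptree, {x = y} + {x <> y} :=
  fun x y => excluded_middle_informative (x = y).

Definition allch (L : list ptree) : list ptree := nodup ptree_dec (flat_map children L).

Definition cover (C : list ptree) (K : nat) : list ptree :=
  flat_map (fun k => map Node (tuples C k)) (seq 0 K).

Lemma cover_sum (h : ptree -> R) C K :
  sumL h (cover C K) = psum (fun k => sumL (fun ts => h (Node ts)) (tuples C k)) K.
Proof. unfold cover, psum. rewrite sumL_flat_map. apply sumL_ext. intros. apply sumL_map. Qed.

Lemma cover_allch L : exists K, incl L (cover (allch L) K).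
Proof.
  assert (HK : exists K, forall t, In t L -> (length (children t) < K)%nat).
  { induction L as [|a L [K HK]]; [exists 0%nat; intros t []|].
    exists (S (Nat.max K (length (children a)))).
    intros t [<-|H]; [lia|]. specialize (HK t H). lia. }
  destruct HK as [K HK]. exists K. intros [ts] Ht. apply in_flat_map.
  exists (length ts). split.
  - apply in_seq. specialize (HK _ Ht). simpl in HK. lia.
  - apply in_map, tuples_in. intros u Hu. apply nodup_In, in_flat_map. exists (Node ts); auto.
Qed.

Lemma tree_sum_bound (h : ptree -> R) (M : R) :
  (forall t, 0 <= h t) -> 0 <= M ->
  (forall C K, NoDup C -> sumL h C <= M -> sumL h (cover C K) <= M) ->
  forall L, NoDup L -> sumL h L <= M.
Proof.
  intros Hh HM Hstep.
  assert (Hn : forall n L, (forall t, In t L -> (tsize t <= n)%nat) -> NoDup L -> sumL h L <= M).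
  { induction n as [|n IH]; intros L HL HN.
    - destruct L as [|t L]; [simpl; lra|].
      specialize (HL t (or_introl eq_refl)). pose proof (tsize_pos t). lia.
    - destruct (cover_allch L) as [K HK].
      eapply Rle_trans; [apply (sumL_incl h _ _ Hh HN HK)|].
      apply Hstep; [apply NoDup_nodup|]. apply IH; [|apply NoDup_nodup].
      intros u Hu. apply nodup_In, in_flat_map in Hu. destruct Hu as [[ts] [Ht Hu]].
      pose proof (tsize_child ts u Hu). specialize (HL _ Ht). lia. }
  intros L HN. apply (Hn (fold_right (fun t a => (tsize t + a)%nat) 0%nat L)); auto.
  clear. induction L as [|a L IH]; simpl; intros t Ht; [destruct Ht|].
  destruct Ht as [<-|H]; [lia|]. specialize (IH t H); lia.
Qed.

Lemma prodL_exp (f a : ptree -> R) ts :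
  prodL (fun u => f u * exp (a u)) ts = prodL f ts * exp (sumL a ts).
Proof.
  induction ts as [|u ts IH]; unfold prodL, sumL in *; simpl; [rewrite exp_0; lra|].
  rewrite IH, exp_plus. ring.
Qed.

Lemma exp_moment_bound (q g : nat -> R) (z : R) :
  (forall k, 0 <= q k) -> 0 < z ->
  (forall K, psum (fun k => q k * exp (g k) * z ^ k) K <= z) ->
  forall L, NoDup L -> sumL (fun t => gw_weight q t * exp (vsum g t)) L <= z.
Proof.
  intros Hq Hz HK. apply tree_sum_bound; [|lra|].
  { intros t. apply Rmult_le_pos; [apply gw_weight_nonneg; auto | apply Rlt_le, exp_pos]. }
  intros C K _ HC. rewrite cover_sum. eapply Rle_trans; [|apply (HK K)].
  apply psum_le. intros k.
  rewrite (sumL_ext _ (fun ts => q k * exp (g k) * prodL (fun t => gw_weight q t * exp (vsum g t)) ts)).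
  - rewrite sumL_scal, tuples_prod. apply Rmult_le_compat_l.
    + apply Rmult_le_pos; auto. apply Rlt_le, exp_pos.
    + apply pow_incr. split; auto. apply sumL_nonneg. intros t _.
      apply Rmult_le_pos; [apply gw_weight_nonneg; auto | apply Rlt_le, exp_pos].
  - intros ts Hts. apply tuples_len in Hts. subst k.
    rewrite gw_weight_node, vsum_node, exp_plus, prodL_exp. ring.
Qed.

Lemma gw_mass_le_1 (q : nat -> R) : (forall k, 0 <= q k) -> (forall K, psum q K <= 1) ->
  forall L, NoDup L -> sumL (gw_weight q) L <= 1.
Proof.
  intros Hq H1 L HL.
  rewrite (sumL_ext _ (fun t => gw_weight q t * exp (vsum (fun _ => 0) t))).
  - apply exp_moment_bound; auto; [lra|].
    intros K. eapply Rle_trans; [|apply (H1 K)]. apply psum_le. intros k.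
    rewrite exp_0, pow1. lra.
  - intros t _. rewrite vsum_const, Rmult_0_l, exp_0. ring.
Qed.

Lemma first_moment_bound (q g : nat -> R) (T kap : R) :
  (forall k, 0 <= q k) -> (forall k, 0 <= g k) -> (forall K, psum q K <= 1) ->
  (forall K, psum (fun k => INR k * q k) K <= kap) -> kap < 1 ->
  (forall K, psum (fun k => q k * g k) K <= T) ->
  forall L, NoDup L -> sumL (fun t => gw_weight q t * vsum g t) L <= T / (1 - kap).
Proof.
  intros Hq Hg H1 Hk Hkap HT.
  assert (T0 : 0 <= T) by (specialize (HT 0%nat); unfold psum in HT; simpl in HT; lra).
  set (M := T / (1 - kap)).
  assert (M0 : 0 <= M) by (apply Rmult_le_pos; auto; apply Rlt_le, Rinv_0_lt_compat; lra).
  assert (HM : T + kap * M = M) by (unfold M; field; lra).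
  apply tree_sum_bound; auto.
  { intros t. apply Rmult_le_pos; [apply gw_weight_nonneg | apply vsum_nonneg]; auto. }
  intros C K HN HC. rewrite cover_sum, <- HM.
  assert (HW : 0 <= sumL (gw_weight q) C <= 1).
  { split; [apply sumL_nonneg; intros; apply gw_weight_nonneg | apply gw_mass_le_1]; auto. }
  apply Rle_trans with (psum (fun k => q k * g k + M * (INR k * q k)) K).
  2:{ rewrite psum_plus, psum_scal. specialize (HT K). specialize (Hk K).
      rewrite (Rmult_comm kap). apply Rplus_le_compat; auto. apply Rmult_le_compat_l; auto. }
  apply psum_le. intros k.
  rewrite (sumL_ext _ (fun ts => (q k * g k) * prodL (gw_weight q) ts
                                 + q k * (prodL (gw_weight q) ts * sumL (vsum g) ts))).
  - rewrite sumL_plus, !sumL_scal, tuples_prod.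
    pose proof (tuples_additive C (gw_weight q) (vsum g) M k
                  (fun u => gw_weight_nonneg q u Hq) (fun u => vsum_nonneg g u Hg) (proj2 HW) HC).
    assert (sumL (gw_weight q) C ^ k <= 1) by (apply pow_le1; lra).
    pose proof (Hq k); pose proof (Hg k). pose proof (pos_INR k).
    apply Rplus_le_compat.
    + rewrite <- (Rmult_1_r (q k * g k)) at 2. apply Rmult_le_compat_l; auto. apply Rmult_le_pos; auto.
    + apply Rle_trans with (q k * (INR k * M)); [apply Rmult_le_compat_l; auto | nra].
  - intros ts Hts. apply tuples_len in Hts. subst k.
    rewrite gw_weight_node, vsum_node. ring.
Qed.

Lemma exp_le x y : x <= y -> exp x <= exp y.
Proof. intros [H|H]; [apply Rlt_le, exp_increasing; auto | subst; lra]. Qed.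

Lemma exp_pow x k : exp x ^ k = exp (INR k * x).
Proof.
  induction k as [|k IH]; [simpl; rewrite Rmult_0_l, exp_0; auto|].
  rewrite S_INR; simpl. rewrite IH, <- exp_plus. f_equal; ring.
Qed.

Lemma exp_quad y : Rabs y <= 1/2 -> exp y <= 1 + y + 2 * y ^ 2.
Proof.
  intros Hy. assert (Hy' : - (1/2) <= y <= 1/2) by (revert Hy; unfold Rabs; destruct Rcase_abs; lra).
  clear Hy.
  (* e^y = 1 / e^(-y/2)^2 <= 1 / (1 - y/2)^2 <= 1 + y + 2 y^2 *)
  assert (E : exp y * exp (- y / 2) ^ 2 = 1).
  { rewrite exp_pow, <- exp_plus, <- exp_0. f_equal. simpl. field. }
  pose proof (exp_ineq1_le (- y / 2)). pose proof (exp_pos y).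
  assert (H2 : (1 + - y / 2) ^ 2 <= exp (- y / 2) ^ 2) by (apply pow_incr; lra).
  assert (H3 : 1 <= (1 + y + 2 * y ^ 2) * (1 + - y / 2) ^ 2).
  { assert (0 <= y ^ 2 * (5/4 - 7/4 * y + 1/2 * y ^ 2)) by (apply Rmult_le_pos; nra).
    replace ((1 + y + 2 * y ^ 2) * (1 + - y / 2) ^ 2)
      with (1 + y ^ 2 * (5/4 - 7/4 * y + 1/2 * y ^ 2)) by field. lra. }
  assert (0 < (1 + - y / 2) ^ 2) by (apply pow_lt; lra).
  apply (Rmult_le_reg_r ((1 + - y / 2) ^ 2)); auto. nra.
Qed.

Lemma one_minus_pow_le W k : 0 <= W <= 1 -> 1 - W ^ k <= INR k * (1 - W).
Proof.
  intros H. induction k as [|k IH]; [simpl; lra|]. rewrite S_INR. simpl.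
  assert (W ^ k <= 1) by (apply pow_le1; lra). assert (0 <= W ^ k) by (apply pow_le; lra). nra.
Qed.

Lemma Rpower_pos x y : 0 < Rpower x y.
Proof. apply exp_pos. Qed.

Lemma Rpower_ge1 x d : 1 <= x -> 0 <= d -> 1 <= Rpower x d.
Proof. intros. rewrite <- (Rpower_O x) by lra. apply Rle_Rpower; auto. Qed.

Lemma Rpower_le1 x d : 1 <= x -> d <= 0 -> Rpower x d <= 1.
Proof. intros. rewrite <- (Rpower_O x) by lra. apply Rle_Rpower; auto. Qed.

Lemma INR_ge1 n : (1 <= n)%nat -> 1 <= INR n.
Proof. intros Hn. apply (le_INR 1). exact Hn. Qed.

Lemma bernoulli_mgf p0 th : 0 <= p0 <= 1 -> Rabs th <= 1/2 ->
  p0 * exp (th * (1 - p0)) + (1 - p0) * exp (th * (0 - p0)) <= exp (2 * th ^ 2).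
Proof.
  intros Hp0 Hth.
  assert (Hth' : - (1/2) <= th <= 1/2) by (revert Hth; unfold Rabs; destruct Rcase_abs; lra).
  assert (Ha : exp (th * (1 - p0)) <= 1 + th * (1 - p0) + 2 * (th * (1 - p0)) ^ 2)
    by (apply exp_quad, Rabs_le; split; nra).
  assert (Hb : exp (th * (0 - p0)) <= 1 + th * (0 - p0) + 2 * (th * (0 - p0)) ^ 2)
    by (apply exp_quad, Rabs_le; split; nra).
  pose proof (exp_ineq1_le (2 * th ^ 2)).
  assert (0 <= th ^ 2) by apply pow2_ge_0. assert (0 <= p0 * (1 - p0)) by nra.
  apply Rle_trans with (p0 * (1 + th * (1 - p0) + 2 * (th * (1 - p0)) ^ 2)
                        + (1 - p0) * (1 + th * (0 - p0) + 2 * (th * (0 - p0)) ^ 2)).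
  - apply Rplus_le_compat; apply Rmult_le_compat_l; lra.
  - nra.
Qed.

(* Exponential-moment condition behind the bound on P(+-D >= x): the
   offspring law tilted by the centred leaf indicator satisfies the
   hypothesis of [exp_moment_bound] with z = 1. *)
Lemma leaf_tilt_step (p : nat -> R) (th : R) :
  (forall k, 0 <= p k) -> (forall K, psum p K <= 1) -> Rabs th <= 1/2 ->
  forall K, psum (fun k => p k * exp (th * (ind0 k - p 0%nat) - 2 * th ^ 2) * 1 ^ k) K <= 1.
Proof.
  intros Hp H1 Hth [|K]; [unfold psum; simpl; lra|].
  set (p0 := p 0%nat).
  assert (Hrest : psum (fun k => p (S k)) K <= 1 - p0).
  { pose proof (H1 (S K)) as H. rewrite psum_shift in H. fold p0 in H. lra. }
  assert (Hp01 : 0 <= p0 <= 1).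
  { split; [apply Hp|]. pose proof (H1 1%nat) as H. unfold psum in H; simpl in H. fold p0 in H. lra. }
  rewrite psum_shift.
  rewrite (psum_ext _ (fun k => exp (th * (0 - p0)) * exp (- (2 * th ^ 2)) * p (S k)))
    by (intros; rewrite pow1, <- exp_plus; simpl ind0; unfold Rminus; ring).
  rewrite psum_scal, pow1. simpl ind0. fold p0.
  pose proof (bernoulli_mgf p0 th Hp01 Hth).
  pose proof (exp_pos (th * (0 - p0))). pose proof (exp_pos (- (2 * th ^ 2))).
  assert (E : exp (2 * th ^ 2) * exp (- (2 * th ^ 2)) = 1)
    by (rewrite <- exp_plus, <- exp_0; f_equal; ring).
  replace (th * (1 - p0) - 2 * th ^ 2) with (th * (1 - p0) + - (2 * th ^ 2)) by ring.
  rewrite exp_plus.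
  assert (exp (th * (0 - p0)) * psum (fun k => p (S k)) K <= exp (th * (0 - p0)) * (1 - p0))
    by (apply Rmult_le_compat_l; lra).
  nra.
Qed.

Definition trunc (p : nat -> R) (B : R) (k : nat) : R := if Rle_dec (INR k) B then p k else 0.
Definition big_degree (B : R) (k : nat) : R := if Rle_dec (INR k) B then 0 else 1.

Lemma big_degree_nonneg B k : 0 <= big_degree B k.
Proof. unfold big_degree; destruct Rle_dec; lra. Qed.

(* Exponential-moment condition behind the bound on the size N of a tree
   with all degrees at most B: with x = (1 - kap)/(4B) the truncated law
   tilted by exp(x(1 - kap)/2) per vertex satisfies [exp_moment_bound] with
   z = e^x, i.e. E e^(lam N) <= e^x for lam = x(1 - kap)/2. *)
Lemma truncated_size_step (p : nat -> R) (kap B : R) :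
  (forall k, 0 <= p k) -> (forall K, psum p K <= 1) ->
  (forall K, psum (fun k => INR k * p k) K <= kap) -> 0 <= kap -> kap < 1 -> 0 < B ->
  forall K, psum (fun k => trunc p B k * exp (((1 - kap) / 4 / B) * (1 - kap) / 2)
                           * exp ((1 - kap) / 4 / B) ^ k) K
            <= exp ((1 - kap) / 4 / B).
Proof.
  intros Hp H1 Hk Hk0 Hk1 HB K.
  assert (Hx : 0 < (1 - kap) / 4 / B) by (apply Rdiv_lt_0_compat; lra).
  assert (HxB : (1 - kap) / 4 / B * B = (1 - kap) / 4) by (field; lra).
  remember ((1 - kap) / 4 / B) as x eqn:Ex. clear Ex.
  remember (x * (1 - kap) / 2) as lam eqn:Elam.
  remember (x + 2 * x ^ 2 * B) as c eqn:Ec.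
  assert (Hc : 0 <= c) by (subst c; pose proof (pow2_ge_0 x); nra).
  (* termwise: e^(kx) <= 1 + (x + 2x^2 B) k for k <= B *)
  apply Rle_trans with (psum (fun k => exp lam * (p k + c * (INR k * p k))) K).
  - apply psum_le. intros k. unfold trunc.
    pose proof (exp_pos lam). pose proof (Hp k). pose proof (pos_INR k).
    destruct (Rle_dec (INR k) B) as [Hkb|Hkb].
    + rewrite exp_pow, (Rmult_comm (p k)), Rmult_assoc. apply Rmult_le_compat_l; [lra|].
      assert (Hkx : INR k * x <= 1/4) by nra.
      assert (Hq : exp (INR k * x) <= 1 + INR k * x + 2 * (INR k * x) ^ 2)
        by (apply exp_quad, Rabs_le; split; nra).
      assert (Hq2 : (INR k * x) ^ 2 <= x ^ 2 * B * INR k).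
      { replace ((INR k * x) ^ 2) with (x ^ 2 * INR k * INR k) by ring.
        apply Rmult_le_compat_r; [lra|]. apply Rmult_le_compat_l; [apply pow2_ge_0 | lra]. }
      subst c. nra.
    + rewrite !Rmult_0_l. apply Rmult_le_pos; [lra|].
      apply Rplus_le_le_0_compat; [lra|]. apply Rmult_le_pos; [|apply Rmult_le_pos]; lra.
  - rewrite psum_scal, psum_plus, psum_scal.
    specialize (H1 K). specialize (Hk K).
    apply Rle_trans with (exp lam * exp (c * kap)).
    { apply Rmult_le_compat_l; [apply Rlt_le, exp_pos|].
      pose proof (exp_ineq1_le (c * kap)). nra. }
    rewrite <- exp_plus. apply exp_le. subst c lam.
    replace (2 * x ^ 2 * B) with (2 * x * (x * B)) by ring. rewrite HxB.
    assert (0 <= x * ((1 - kap) * (1 - kap))) by (apply Rmult_le_pos; [lra | apply Rle_0_sqr]).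
    nra.
Qed.

Lemma truncation_or_big_degree p B t : (forall k, 0 <= p k) ->
  gw_weight (trunc p B) t = gw_weight p t \/ 1 <= vsum (big_degree B) t.
Proof.
  intros Hp. induction t as [ts IH] using ptree_ind2.
  rewrite !gw_weight_node, vsum_node.
  assert (0 <= sumL (vsum (big_degree B)) ts)
    by (apply sumL_nonneg; intros; apply vsum_nonneg, big_degree_nonneg).
  unfold trunc at 1, big_degree at 1. destruct (Rle_dec (INR (length ts)) B); [|right; lra].
  assert (Hprod : prodL (gw_weight (trunc p B)) ts = prodL (gw_weight p) ts
                  \/ 1 <= sumL (vsum (big_degree B)) ts).
  { clear - IH. induction ts as [|u ts IHts]; [left; reflexivity|].
    assert (0 <= sumL (vsum (big_degree B)) ts)
      by (apply sumL_nonneg; intros; apply vsum_nonneg, big_degree_nonneg).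
    assert (0 <= vsum (big_degree B) u) by (apply vsum_nonneg, big_degree_nonneg).
    change (prodL ?f (u :: ts)) with (f u * prodL f ts).
    change (sumL ?f (u :: ts)) with (f u + sumL f ts).
    destruct (IH u (or_introl eq_refl)) as [E|E]; [|right; lra].
    destruct IHts as [E'|E']; [intros; apply IH; right; auto | left; rewrite E, E'; auto | right; lra]. }
  destruct Hprod as [E|E]; [left; rewrite E; auto | right; lra].
Qed.

Lemma le_weighted_exp (c w y : R) : 0 <= w -> 0 <= c + y -> w <= exp c * (w * exp y).
Proof.
  intros Hw Hcy. replace (exp c * (w * exp y)) with (w * exp (c + y)) by (rewrite exp_plus; ring).
  assert (1 <= exp (c + y)) by (rewrite <- exp_0; apply exp_le; lra). nra.
Qed.

(* Pointwise domination behind the union bound for P(|D| >= x): a tree with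
   |D| >= x has a vertex of degree > B, or (all degrees <= B and) size >= m,
   or size < m and D >= x, or size < m and D <= -x; each case is dominated by
   the corresponding exponential/first-moment weight. *)
Lemma deviation_pointwise (p : nat -> R) (B lam m th x : R) (t : ptree) :
  (forall k, 0 <= p k) -> 0 <= lam -> 0 <= th ->
  Rabs (INR (tleaves t) - p 0%nat * INR (tsize t)) >= x ->
  gw_weight p t <=
    gw_weight p t * vsum (big_degree B) t
    + exp (- (lam * m)) * (gw_weight (trunc p B) t * exp (vsum (fun _ => lam) t))
    + exp (- th * x + 2 * th ^ 2 * m)
        * (gw_weight p t * exp (vsum (fun k => th * (ind0 k - p 0%nat) - 2 * th ^ 2) t))
    + exp (- th * x + 2 * th ^ 2 * m)
        * (gw_weight p t * exp (vsum (fun k => (- th) * (ind0 k - p 0%nat) - 2 * (- th) ^ 2) t)).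
Proof.
  intros Hp Hlam Hth Hdev.
  assert (Hw : 0 <= gw_weight p t) by (apply gw_weight_nonneg; auto).
  assert (Hq : 0 <= gw_weight (trunc p B) t)
    by (apply gw_weight_nonneg; intros; unfold trunc; destruct Rle_dec; auto; lra).
  assert (Hnn : forall c w y, 0 <= w -> 0 <= exp c * (w * exp y)).
  { intros c w y H. pose proof (exp_pos c). pose proof (exp_pos y).
    apply Rmult_le_pos; [lra | apply Rmult_le_pos; lra]. }
  assert (H1 : 0 <= gw_weight p t * vsum (big_degree B) t)
    by (apply Rmult_le_pos; auto; apply vsum_nonneg, big_degree_nonneg).
  rewrite !vsum_deviation.
  set (N := INR (tsize t)) in *. set (D := INR (tleaves t) - p 0%nat * N) in *.
  pose proof (Hnn (- (lam * m)) _ (vsum (fun _ => lam) t) Hq).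
  pose proof (Hnn (- th * x + 2 * th ^ 2 * m) _ (th * D - 2 * th ^ 2 * N) Hw).
  pose proof (Hnn (- th * x + 2 * th ^ 2 * m) _ (- th * D - 2 * (- th) ^ 2 * N) Hw).
  (* it suffices that one of the four terms dominates the weight *)
  destruct (truncation_or_big_degree p B t Hp) as [Etr|Ebig]; [|nra].
  assert (Hth2 : 0 <= th ^ 2) by apply pow2_ge_0.
  destruct (Rle_dec m N) as [HmN|HmN].
  { assert (gw_weight p t <= exp (- (lam * m)) * (gw_weight (trunc p B) t * exp (vsum (fun _ => lam) t)));
      [|lra].
    rewrite Etr, vsum_const. apply le_weighted_exp; auto. fold N. nra. }
  assert (HD : x <= D \/ D <= - x) by (revert Hdev; unfold Rabs; destruct Rcase_abs; lra).
  destruct HD as [HD|HD].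
  - assert (gw_weight p t <= exp (- th * x + 2 * th ^ 2 * m)
                             * (gw_weight p t * exp (th * D - 2 * th ^ 2 * N)));
      [apply le_weighted_exp; auto; nra | lra].
  - assert (gw_weight p t <= exp (- th * x + 2 * th ^ 2 * m)
                             * (gw_weight p t * exp (- th * D - 2 * (- th) ^ 2 * N)));
      [apply le_weighted_exp; auto; nra | lra].
Qed.

Lemma deviation_tail_bound (p : nat -> R) (kap B m th x T : R) :
  (forall k, 0 <= p k) -> (forall K, psum p K <= 1) ->
  (forall K, psum (fun k => INR k * p k) K <= kap) -> 0 <= kap -> kap < 1 ->
  0 < B -> 0 <= th <= 1/2 ->
  (forall K, psum (fun k => p k * big_degree B k) K <= T) ->
  forall L, NoDup L -> Forall (fun t => Rabs (INR (tleaves t) - p 0%nat * INR (tsize t)) >= x) L ->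
  sumL (gw_weight p) L <= T / (1 - kap)
     + exp ((1 - kap) / 4 / B - ((1 - kap) / 4 / B) * (1 - kap) / 2 * m)
     + 2 * exp (- th * x + 2 * th ^ 2 * m).
Proof.
  intros Hp H1 Hk Hk0 Hk1 HB Hth HT L HN HF.
  set (y := (1 - kap) / 4 / B). set (lam := y * (1 - kap) / 2).
  assert (Hy : 0 < y) by (unfold y; apply Rdiv_lt_0_compat; lra).
  assert (Hlam : 0 <= lam) by (unfold lam; apply Rmult_le_pos; [|lra]; apply Rmult_le_pos; lra).
  set (Bc := exp (- th * x + 2 * th ^ 2 * m)).
  eapply Rle_trans.
  { apply sumL_le. intros t Ht. rewrite Forall_forall in HF.
    apply (deviation_pointwise p B lam m th x t Hp Hlam (proj1 Hth) (HF t Ht)). }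
  rewrite !sumL_plus, !sumL_scal. fold Bc.
  assert (Hbig : sumL (fun t => gw_weight p t * vsum (big_degree B) t) L <= T / (1 - kap))
    by (apply first_moment_bound; auto; apply big_degree_nonneg).
  assert (Hsize : sumL (fun t => gw_weight (trunc p B) t * exp (vsum (fun _ => lam) t)) L <= exp y).
  { apply exp_moment_bound; auto; [intros; unfold trunc; destruct Rle_dec; auto; lra | apply exp_pos |].
    apply truncated_size_step; auto. }
  assert (Hpos : sumL (fun t => gw_weight p t
                   * exp (vsum (fun k => th * (ind0 k - p 0%nat) - 2 * th ^ 2) t)) L <= 1).
  { apply exp_moment_bound; auto; [lra|]. apply leaf_tilt_step; auto. rewrite Rabs_right; lra. }
  assert (Hneg : sumL (fun t => gw_weight p t
                   * exp (vsum (fun k => - th * (ind0 k - p 0%nat) - 2 * (- th) ^ 2) t)) L <= 1).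
  { apply exp_moment_bound; auto; [lra|]. apply leaf_tilt_step; auto.
    rewrite Rabs_Ropp, Rabs_right; lra. }
  assert (Esize : exp (y - lam * m) = exp (- (lam * m)) * exp y)
    by (rewrite <- exp_plus; f_equal; ring).
  fold y lam. rewrite Esize.
  pose proof (exp_pos (- (lam * m))). assert (0 < Bc) by apply exp_pos.
  nra.
Qed.

Lemma gw_prob_lower p E l L : gw_prob p E l -> NoDup L -> Forall E L -> sumL (gw_weight p) L <= l.
Proof. intros [Hub _] HN HF. apply Hub. exists L. auto. Qed.

Lemma gw_prob_upper p E l b : gw_prob p E l ->
  (forall L, NoDup L -> Forall E L -> sumL (gw_weight p) L <= b) -> l <= b.
Proof. intros [_ Hlub] H. apply Hlub. intros s [L [HN [HF ->]]]. apply H; auto. Qed.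

(* Lower bound P(N >= n) >= p_n / 2.  The trees of height <= h with all
   degrees <= d form a finite set [bounded_trees d h] whose mass tends to 1;
   a root with n children drawn from this set has size > n. *)

Fixpoint bounded_trees (d h : nat) : list ptree :=
  match h with O => [] | S h' => cover (bounded_trees d h') (S d) end.

Lemma cover_NoDup C K : NoDup C -> NoDup (cover C K).
Proof.
  intros HC. unfold cover. generalize 0%nat as a. induction K as [|K IH]; intros a; simpl; [constructor|].
  apply NoDup_app; auto.
  - apply map_inj_NoDup; [intros x y E; injection E; auto | apply tuples_NoDup; auto].
  - intros t H1 H2. apply in_map_iff in H1. destruct H1 as [ts [<- Hts]].
    apply in_flat_map in H2. destruct H2 as [k [Hk H2]].
    apply in_map_iff in H2. destruct H2 as [us [E Hus]]. injection E; intros; subst.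
    apply tuples_len in Hts. apply tuples_len in Hus. apply in_seq in Hk. lia.
Qed.

Lemma bounded_trees_NoDup d h : NoDup (bounded_trees d h).
Proof. induction h; simpl; [constructor | apply cover_NoDup; auto]. Qed.

Lemma bounded_trees_mass_S p d h :
  sumL (gw_weight p) (bounded_trees d (S h))
  = psum (fun k => p k * (sumL (gw_weight p) (bounded_trees d h)) ^ k) (S d).
Proof.
  change (bounded_trees d (S h)) with (cover (bounded_trees d h) (S d)).
  rewrite cover_sum. apply psum_ext. intros k.
  rewrite (sumL_ext _ (fun ts => p k * prodL (gw_weight p) ts)).
  - rewrite sumL_scal, tuples_prod. auto.
  - intros ts Hts. apply tuples_len in Hts. subst. apply gw_weight_node.
Qed.

Lemma bounded_trees_defect p kap d : (forall k, 0 <= p k) -> (forall K, psum p K <= 1) ->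
  (forall K, psum (fun k => INR k * p k) K <= kap) -> 0 <= kap -> kap < 1 ->
  forall h, 1 - sumL (gw_weight p) (bounded_trees d h) <= (1 - psum p (S d)) / (1 - kap) + kap ^ h.
Proof.
  intros Hp H1 Hk Hk0 Hk1. set (Td := 1 - psum p (S d)).
  assert (HTd : 0 <= Td) by (unfold Td; specialize (H1 (S d)); lra).
  assert (HT' : 0 <= Td / (1 - kap)) by (apply Rmult_le_pos; auto; apply Rlt_le, Rinv_0_lt_compat; lra).
  induction h as [|h IH]; [simpl; unfold sumL; simpl; lra|].
  rewrite bounded_trees_mass_S. set (W := sumL (gw_weight p) (bounded_trees d h)) in *.
  assert (HW : 0 <= W <= 1).
  { split; [apply sumL_nonneg; intros; apply gw_weight_nonneg; auto|].
    apply gw_mass_le_1, bounded_trees_NoDup; auto. }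
  assert (E : psum p (S d) - psum (fun k => p k * W ^ k) (S d) <= kap * (1 - W)).
  { replace (psum p (S d) - psum (fun k => p k * W ^ k) (S d))
      with (psum (fun k => p k * (1 - W ^ k)) (S d)).
    2:{ rewrite (psum_ext _ (fun k => p k + (-1) * (p k * W ^ k))) by (intros; ring).
        rewrite psum_plus, psum_scal. ring. }
    apply Rle_trans with (psum (fun k => (1 - W) * (INR k * p k)) (S d)).
    - apply psum_le. intros k. pose proof (one_minus_pow_le W k HW). pose proof (Hp k). nra.
    - rewrite psum_scal. specialize (Hk (S d)). nra. }
  simpl. assert (0 <= kap ^ h) by (apply pow_le; lra).
  apply Rle_trans with (Td + kap * (Td / (1 - kap) + kap ^ h)); [unfold Td in *; nra|].
  replace (Td / (1 - kap)) with (Td + kap * (Td / (1 - kap))) at 2 by (field; lra). lra.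
Qed.

Lemma size_tail_lower (p : nat -> R) kap (Q : nat -> R) :
  (forall k, 0 <= p k) -> infinite_sum p 1 ->
  (forall K, psum (fun k => INR k * p k) K <= kap) -> 0 <= kap -> kap < 1 ->
  (forall n : nat, gw_prob p (fun t => (n <= tsize t)%nat) (Q n)) ->
  forall n, (1 <= n)%nat -> p n / 2 <= Q n.
Proof.
  intros Hp Hs Hk Hk0 Hk1 HQ n Hn.
  assert (H1 : forall K, psum p K <= 1) by (apply psum_le_inf; auto).
  assert (Hn' : 0 < INR n) by (apply lt_0_INR; lia).
  set (y := 1 / (4 * INR n)). assert (Hy : 0 < y) by (unfold y; apply Rdiv_lt_0_compat; lra).
  (* choose d and h so that the bounded trees miss at most 2y of the mass *)
  destruct (Hs (y * (1 - kap))) as [d Hd]; [apply Rmult_lt_0_compat; lra|].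
  specialize (Hd d (Nat.le_refl d)).
  assert (HTd : (1 - psum p (S d)) / (1 - kap) <= y).
  { rewrite sum_f_R0_psum in Hd. unfold Rdist in Hd.
    apply Rle_trans with (y * (1 - kap) / (1 - kap)); [|right; field; lra].
    apply Rmult_le_compat_r; [apply Rlt_le, Rinv_0_lt_compat; lra|].
    revert Hd; unfold Rabs; destruct Rcase_abs; lra. }
  destruct (pow_lt_1_zero kap ltac:(rewrite Rabs_right; lra) y Hy) as [h Hh].
  specialize (Hh h (Nat.le_refl h)). rewrite Rabs_right in Hh by (apply Rle_ge, pow_le; lra).
  pose proof (bounded_trees_defect p kap d Hp H1 Hk Hk0 Hk1 h) as EB.
  set (C := bounded_trees d h) in *. set (W := sumL (gw_weight p) C) in *.
  assert (HW : 0 <= W <= 1).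
  { split; [apply sumL_nonneg; intros; apply gw_weight_nonneg; auto|].
    apply gw_mass_le_1, bounded_trees_NoDup; auto. }
  (* the trees whose root has n children from C all have size > n *)
  eapply Rle_trans; [|apply (gw_prob_lower p _ _ (map Node (tuples C n)) (HQ n))].
  - rewrite sumL_map.
    rewrite (sumL_ext _ (fun ts => p n * prodL (gw_weight p) ts)).
    2:{ intros ts Hts. apply tuples_len in Hts. subst. apply gw_weight_node. }
    rewrite sumL_scal, tuples_prod. fold W.
    pose proof (one_minus_pow_le W n HW). pose proof (Hp n).
    assert (INR n * (1 - W) <= 1/2).
    { apply Rle_trans with (INR n * (2 * y)); [apply Rmult_le_compat_l; lra|].
      unfold y. right. field. lra. }
    nra.
  - apply map_inj_NoDup; [intros a b E; injection E; auto | apply tuples_NoDup, bounded_trees_NoDup].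
  - apply Forall_forall. intros t Ht. apply in_map_iff in Ht. destruct Ht as [ts [<- Hts]].
    apply tuples_len in Hts. pose proof (tsize_ge_len ts). lia.
Qed.

(* Potter's bounds: a slowly varying sequence satisfies
   c k^(-d) <= L k <= C k^d for every d > 0.  Proof by induction from
   m = floor(k/2) to k, using L(m)/L(k) -> 1. *)

Lemma half_floor (n : nat) : (4 <= n)%nat ->
  let m := Z.to_nat (Int_part (1/2 * INR n)) in (1 <= m)%nat /\ INR m <= INR n / 2 /\ (m < n)%nat.
Proof.
  intros Hn m. pose proof (base_Int_part (1/2 * INR n)) as [H1 H2].
  assert (H4 : 4 <= INR n) by (replace 4 with (INR 4) by (simpl; lra); apply le_INR; auto).
  assert (Hz : (1 < Int_part (1/2 * INR n))%Z) by (apply lt_IZR; lra).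
  assert (Em : INR m = IZR (Int_part (1/2 * INR n)))
    by (unfold m; rewrite INR_IZR_INZ, Z2Nat.id by lia; auto).
  split; [|split]; [apply (INR_le 1); simpl; lra | lra | apply INR_lt; lra].
Qed.

Lemma finite_bounds (L : nat -> R) (n0 : nat) : (forall n, (1 <= n)%nat -> 0 < L n) ->
  exists C c, 0 < C /\ 0 < c /\ forall k, (1 <= k <= n0)%nat -> c <= L k <= C.
Proof.
  intros HL. induction n0 as [|n0 [C [c [HC [Hc H]]]]].
  - exists 1, 1. repeat split; try lra; lia.
  - exists (Rmax C (L (S n0))), (Rmin c (L (S n0))).
    pose proof (HL (S n0) ltac:(lia)). pose proof (Rmax_l C (L (S n0))). pose proof (Rmin_l c (L (S n0))).
    split; [lra|]. split; [apply Rmin_glb_lt; auto|].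
    intros k Hk. destruct (Nat.eq_dec k (S n0)) as [->|Hne]; [split; [apply Rmin_r | apply Rmax_r]|].
    specialize (H k ltac:(lia)). lra.
Qed.

Lemma potter_step (C c d Lk Lm xm xk : R) :
  0 < d -> 0 < Lk -> 1 <= xm <= xk / 2 ->
  Rpower 2 (- d) * Lk < Lm < Rpower 2 d * Lk ->
  c * Rpower xm (- d) <= Lm <= C * Rpower xm d -> 0 < C -> 0 < c ->
  c * Rpower xk (- d) <= Lk <= C * Rpower xk d.
Proof.
  intros Hd HLk Hx [Hr1 Hr2] [Hl Hu] HC Hc.
  pose proof (Rpower_pos 2 d). pose proof (Rpower_pos 2 (- d)).
  assert (E2 : Rpower 2 (- d) * Rpower 2 d = 1)
    by (rewrite <- Rpower_plus; replace (- d + d) with 0 by ring; apply Rpower_O; lra).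
  assert (Ek : Rpower xk d = Rpower 2 d * Rpower (xk / 2) d)
    by (rewrite Rpower_mult_distr by lra; f_equal; field).
  assert (Ek' : Rpower xk (- d) = Rpower 2 (- d) * Rpower (xk / 2) (- d))
    by (rewrite Rpower_mult_distr by lra; f_equal; field).
  assert (Mu : Rpower xm d <= Rpower (xk / 2) d) by (apply Rle_Rpower_l; lra).
  assert (Ml : Rpower (xk / 2) (- d) <= Rpower xm (- d)).
  { rewrite !Rpower_Ropp. apply Rinv_le_contravar; [apply Rpower_pos | apply Rle_Rpower_l; lra]. }
  split.
  - rewrite Ek'. apply Rle_trans with (Rpower 2 (- d) * (Rpower 2 d * Lk)); [|nra].
    assert (c * Rpower (xk / 2) (- d) <= Rpower 2 d * Lk) by nra.
    replace (c * (Rpower 2 (- d) * Rpower (xk / 2) (- d)))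
      with (Rpower 2 (- d) * (c * Rpower (xk / 2) (- d))) by ring.
    apply Rmult_le_compat_l; lra.
  - rewrite Ek. apply Rle_trans with (Rpower 2 d * (Rpower 2 (- d) * Lk)); [nra|].
    assert (Rpower 2 (- d) * Lk <= C * Rpower (xk / 2) d) by nra.
    replace (C * (Rpower 2 d * Rpower (xk / 2) d)) with (Rpower 2 d * (C * Rpower (xk / 2) d)) by ring.
    apply Rmult_le_compat_l; lra.
Qed.

Lemma potter_bounds (L : nat -> R) (d : R) : slowly_varying_seq L -> 0 < d ->
  exists C c, 0 < C /\ 0 < c /\ forall k, (1 <= k)%nat ->
    c * Rpower (INR k) (- d) <= L k <= C * Rpower (INR k) d.
Proof.
  intros [HLp HLv] Hd.
  assert (H2u : 1 < Rpower 2 d) by (rewrite <- (Rpower_O 2) by lra; apply Rpower_lt; lra).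
  assert (H2l : Rpower 2 (- d) < 1) by (rewrite <- (Rpower_O 2) by lra; apply Rpower_lt; lra).
  set (eta := Rmin (Rpower 2 d - 1) (1 - Rpower 2 (- d))).
  assert (Heta : 0 < eta) by (apply Rmin_glb_lt; lra).
  assert (He1 : eta <= Rpower 2 d - 1) by apply Rmin_l.
  assert (He2 : eta <= 1 - Rpower 2 (- d)) by apply Rmin_r.
  clearbody eta.
  destruct (HLv (1/2) ltac:(lra) eta Heta) as [N1 HN1].
  destruct (finite_bounds L (Nat.max N1 4) HLp) as [C [c [HC [Hc Hb]]]].
  exists C, c. split; auto. split; auto.
  intros k Hk. induction k as [k IH] using (well_founded_induction lt_wf).
  pose proof (INR_ge1 k Hk) as Hk1.
  destruct (le_lt_dec k (Nat.max N1 4)) as [Hk0|Hk0].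
  - specialize (Hb k ltac:(lia)).
    pose proof (Rpower_ge1 (INR k) d Hk1 ltac:(lra)). pose proof (Rpower_le1 (INR k) (- d) Hk1 ltac:(lra)).
    pose proof (Rpower_pos (INR k) (- d)). split; nra.
  - destruct (half_floor k ltac:(lia)) as [Hm1 [Hm2 Hm3]].
    set (m := Z.to_nat (Int_part (1/2 * INR k))) in *.
    specialize (HN1 k ltac:(lia)). unfold Rdist in HN1. fold m in HN1.
    pose proof (HLp k ltac:(lia)) as Lk.
    assert (Hr : Rpower 2 (- d) < L m / L k < Rpower 2 d)
      by (revert HN1; unfold Rabs; destruct Rcase_abs; intros; lra).
    apply (potter_step C c d (L k) (L m) (INR m) (INR k)); auto.
    + split; [apply INR_ge1; auto | lra].
    + assert (E : forall r, r * L k / L k = r) by (intros; field; lra).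
      split; apply (Rmult_lt_reg_r (/ L k)); try (apply Rinv_0_lt_compat; lra);
        fold (Rdiv (Rpower 2 (- d) * L k) (L k)) (Rdiv (Rpower 2 d * L k) (L k)) (Rdiv (L m) (L k));
        rewrite E; lra.
Qed.

(* Tail of a power series: sum_{k > B} k^(-sg) <= (B/2)^(1-sg) / (sg - 1),
   by telescoping with a k^(-(a+1)) <= (k-1)^(-a) - k^(-a). *)

Lemma ln_le_sub1 z : 0 < z -> ln z <= z - 1.
Proof.
  intros Hz. rewrite <- (ln_exp (z - 1)).
  destruct (Rle_lt_or_eq_dec _ _ (exp_ineq1_le (z - 1))) as [H|H].
  - apply Rlt_le, ln_increasing; lra.
  - replace (exp (z - 1)) with z by lra. lra.
Qed.

Lemma power_difference_lower y a : 2 <= y -> 0 < a ->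
  a * Rpower y (- (a + 1)) <= Rpower (y - 1) (- a) - Rpower y (- a).
Proof.
  intros Hy Ha. unfold Rpower.
  assert (Hl : ln (y - 1) <= ln y - 1 / y).
  { replace (y - 1) with (y * ((y - 1) / y)) by (field; lra).
    rewrite ln_mult by (try apply Rdiv_lt_0_compat; lra).
    pose proof (ln_le_sub1 ((y - 1) / y) ltac:(apply Rdiv_lt_0_compat; lra)) as H.
    replace ((y - 1) / y - 1) with (- (1 / y)) in H by (field; lra). lra. }
  set (E := exp (- a * ln y)).
  assert (E1 : exp (- (a + 1) * ln y) = E * / y).
  { unfold E. replace (- (a + 1) * ln y) with (- a * ln y + - ln y) by ring.
    rewrite exp_plus, exp_Ropp, exp_ln by lra. auto. }
  assert (E2 : E * (1 + a / y) <= exp (- a * ln (y - 1))).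
  { apply Rle_trans with (E * exp (a / y)).
    - apply Rmult_le_compat_l; [apply Rlt_le, exp_pos | apply exp_ineq1_le].
    - unfold E. rewrite <- exp_plus. apply exp_le. unfold Rdiv. nra. }
  rewrite E1. fold E. assert (0 < E) by apply exp_pos.
  replace (a * (E * / y)) with (E * (1 + a / y) - E) by (field; lra). lra.
Qed.

Lemma power_tail_sum (sg B : R) : 1 < sg -> 2 <= B ->
  forall K, psum (fun k => big_degree B k * Rpower (INR k) (- sg)) K <= Rpower (B / 2) (1 - sg) / (sg - 1).
Proof.
  intros Hs HB.
  set (F := fun y => Rpower y (1 - sg)).
  assert (Fdec : forall u v, 0 < u -> u <= v -> F v <= F u).
  { intros u v Hu Huv. unfold F. replace (1 - sg) with (- (sg - 1)) by ring. rewrite !Rpower_Ropp.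
    apply Rinv_le_contravar; [apply Rpower_pos | apply Rle_Rpower_l; lra]. }
  (* invariant: the partial sum up to K telescopes to F(B/2) - F(max(K-1, B/2)) *)
  assert (Inv : forall K, psum (fun k => big_degree B k * Rpower (INR k) (- sg)) K
                          <= (F (B/2) - F (Rmax (INR K - 1) (B/2))) / (sg - 1)).
  { induction K as [|K IH].
    - unfold psum; simpl. rewrite Rmax_right by lra. unfold Rdiv; rewrite Rminus_diag; lra.
    - rewrite psum_S, S_INR. replace (INR K + 1 - 1) with (INR K) by ring.
      unfold big_degree at 2. destruct (Rle_dec (INR K) B) as [HK|HK].
      + rewrite Rmult_0_l, Rplus_0_r. eapply Rle_trans; [apply IH|].
        apply Rmult_le_compat_r; [apply Rlt_le, Rinv_0_lt_compat; lra|].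
        assert (F (Rmax (INR K) (B/2)) <= F (Rmax (INR K - 1) (B/2))); [|lra].
        apply Fdec; [apply Rlt_le_trans with (B/2); [lra | apply Rmax_r]|].
        apply Rmax_lub; [apply Rle_trans with (INR K); [lra | apply Rmax_l] | apply Rmax_r].
      + rewrite Rmult_1_l. rewrite Rmax_left in IH by lra. rewrite Rmax_left by lra.
        pose proof (power_difference_lower (INR K) (sg - 1) ltac:(lra) ltac:(lra)) as H.
        replace (- (sg - 1 + 1)) with (- sg) in H by ring.
        replace (- (sg - 1)) with (1 - sg) in H by ring.
        fold (F (INR K - 1)) (F (INR K)) in H.
        apply Rle_trans with ((F (B / 2) - F (INR K - 1)) / (sg - 1)
                              + (F (INR K - 1) - F (INR K)) / (sg - 1)).
        * apply Rplus_le_compat; auto.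
          apply (Rmult_le_reg_l (sg - 1)); [lra|]. unfold Rdiv. field_simplify; lra.
        * right; field; lra. }
  intros K. eapply Rle_trans; [apply Inv|].
  apply Rmult_le_compat_r; [apply Rlt_le, Rinv_0_lt_compat; lra|].
  assert (0 < F (Rmax (INR K - 1) (B / 2))) by apply Rpower_pos. unfold F in *; lra.
Qed.

Lemma stretched_exp_le_power c e A : 0 < c -> 0 < e -> exists K, 0 <= K /\
  forall x, 1 <= x -> exp (- (c * Rpower x e)) <= K * Rpower x (- A).
Proof.
  intros Hc He.
  set (j := S (Z.to_nat (up (Rabs A / e)))).
  assert (Hj : A <= e * INR j).
  { unfold j. rewrite S_INR, INR_IZR_INZ.
    destruct (archimed (Rabs A / e)) as [H1 _].
    assert (0 <= Rabs A / e)
      by (apply Rmult_le_pos; [apply Rabs_pos | apply Rlt_le, Rinv_0_lt_compat; auto]).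
    assert (Rabs A / e <= IZR (Z.of_nat (Z.to_nat (up (Rabs A / e))))).
    { destruct (Z_le_gt_dec 0 (up (Rabs A / e))) as [Hz|Hz]; [rewrite Z2Nat.id by auto; lra|].
      assert (Hz2 : (up (Rabs A / e) < 0)%Z) by lia. apply IZR_lt in Hz2. lra. }
    assert (A <= Rabs A) by apply RRle_abs.
    assert (Rabs A = e * (Rabs A / e)) by (field; lra). nra. }
  assert (Hj0 : 0 < INR j) by (unfold j; apply lt_0_INR; lia).
  (* e^(cy) >= (cy/j)^j, with y = x^e *)
  exists ((INR j / c) ^ j). split; [apply pow_le, Rlt_le, Rdiv_lt_0_compat; auto|].
  intros x Hx. set (y := Rpower x e).
  assert (Hy : 1 <= y) by (apply Rpower_ge1; lra).
  assert (Hb : (c * y / INR j) ^ j <= exp (c * y)).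
  { replace (exp (c * y)) with (exp (c * y / INR j) ^ j) by (rewrite exp_pow; f_equal; field; lra).
    apply pow_incr. split; [apply Rlt_le, Rdiv_lt_0_compat; nra|].
    pose proof (exp_ineq1_le (c * y / INR j)); lra. }
  assert (Hpos : 0 < (c * y / INR j) ^ j) by (apply pow_lt, Rdiv_lt_0_compat; nra).
  rewrite exp_Ropp.
  apply Rle_trans with (/ ((c * y / INR j) ^ j)); [apply Rinv_le_contravar; auto|].
  assert (Eyj : (c * y / INR j) ^ j = (c / INR j) ^ j * Rpower x (e * INR j)).
  { rewrite <- Rpower_mult, Rpower_pow by (apply Rpower_pos). fold y.
    rewrite <- Rpow_mult_distr. f_equal. field. lra. }
  rewrite Eyj, Rinv_mult.
  replace (/ (c / INR j) ^ j) with ((INR j / c) ^ j) by (rewrite <- pow_inv; f_equal; field; lra).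
  apply Rmult_le_compat_l; [apply pow_le, Rlt_le, Rdiv_lt_0_compat; auto|].
  rewrite Rpower_Ropp. apply Rinv_le_contravar; [apply Rpower_pos | apply Rle_Rpower; lra].
Qed.

Lemma little_o_of_power_gap (P g : nat -> R) (a A K c : R) : a < A -> 0 < c -> 0 <= K ->
  (exists N0, forall n, (N0 <= n)%nat ->
     0 <= P n <= K * Rpower (INR n) (- A) /\ c * Rpower (INR n) (- a) <= g n) ->
  little_o P g.
Proof.
  intros HaA Hc HK [N0 HN] eps Heps.
  set (gm := A - a). assert (Hgm : 0 < gm) by (unfold gm; lra).
  set (Y := Rmax 1 (K / (eps * c))).
  set (N1 := Z.to_nat (up (Rpower Y (/ gm)))).
  exists (Nat.max (Nat.max N0 N1) 1). intros n Hn.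
  destruct (HN n ltac:(lia)) as [[HP0 HP] Hg].
  set (x := INR n) in *.
  assert (Hx1 : 1 <= x) by (apply INR_ge1; lia).
  (* x >= Y^(1/gm), hence x^gm >= Y >= K / (eps c) *)
  assert (HxY : Rpower Y (/ gm) <= x).
  { destruct (archimed (Rpower Y (/ gm))) as [H1 _].
    assert (0 < Rpower Y (/ gm)) by apply Rpower_pos.
    assert (IZR (up (Rpower Y (/ gm))) = INR N1)
      by (unfold N1; rewrite INR_IZR_INZ, Z2Nat.id; auto; apply le_IZR; lra).
    assert (INR N1 <= x) by (apply le_INR; lia). lra. }
  assert (HY1 : 1 <= Y) by apply Rmax_l.
  assert (HxgY : Y <= Rpower x gm).
  { replace Y with (Rpower (Rpower Y (/ gm)) gm).
    - apply Rle_Rpower_l; [lra | split; auto; apply Rpower_pos].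
    - rewrite Rpower_mult. replace (/ gm * gm) with 1 by (field; lra). apply Rpower_1. lra. }
  assert (Hpa : 0 < Rpower x (- a)) by apply Rpower_pos.
  assert (Hgp : 0 < Rpower x gm) by apply Rpower_pos.
  assert (Ea : Rpower x (- A) = Rpower x (- a) * / Rpower x gm).
  { replace (- A) with (- a + - gm) by (unfold gm; ring). rewrite Rpower_plus, (Rpower_Ropp x gm). auto. }
  assert (Kle : K <= eps * c * Rpower x gm).
  { apply Rle_trans with (eps * c * Y); [|apply Rmult_le_compat_l; nra].
    apply Rle_trans with (eps * c * (K / (eps * c))); [right; field; nra|].
    apply Rmult_le_compat_l; [nra | apply Rmax_r]. }
  rewrite Rabs_right by lra. rewrite Rabs_right by nra.
  apply Rle_trans with (K * Rpower x (- A)); auto.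
  rewrite Ea. apply Rle_trans with (eps * c * Rpower x gm * (Rpower x (- a) * / Rpower x gm)).
  - apply Rmult_le_compat_r; auto. apply Rmult_le_pos; [lra | apply Rlt_le, Rinv_0_lt_compat; auto].
  - replace (eps * c * Rpower x gm * (Rpower x (- a) * / Rpower x gm)) with (eps * (c * Rpower x (- a)))
      by (field; lra).
    apply Rmult_le_compat_l; lra.
Qed.

Lemma big_degree_mass (p : nat -> R) (C sg B : R) : 0 <= C -> 1 < sg -> 2 <= B ->
  (forall k, (1 <= k)%nat -> p k <= C * Rpower (INR k) (- sg)) ->
  forall K, psum (fun k => p k * big_degree B k) K <= C * (Rpower (B / 2) (1 - sg) / (sg - 1)).
Proof.
  intros HC Hsg HB Hpk K.
  apply Rle_trans with (C * psum (fun k => big_degree B k * Rpower (INR k) (- sg)) K).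
  - rewrite <- psum_scal. apply psum_le. intros k. unfold big_degree. destruct Rle_dec as [Hkb|Hkb].
    + rewrite !Rmult_0_r, Rmult_0_l, Rmult_0_r. lra.
    + rewrite Rmult_1_r, Rmult_1_l. apply Hpk. destruct k; [simpl in Hkb; lra | lia].
  - apply Rmult_le_compat_l; [lra | apply power_tail_sum; lra].
Qed.

Lemma chosen_exponents (x e kap sg : R) : 0 < x ->
  let B := Rpower x (2 - 2 * e) in let m := Rpower x (2 - e) in let th := x / (4 * m) in
  Rpower (B / 2) (1 - sg) = Rpower 2 (sg - 1) * Rpower x (- ((2 - 2 * e) * (sg - 1))) /\
  (1 - kap) / 4 / B * (1 - kap) / 2 * m = (1 - kap) * (1 - kap) / 8 * Rpower x e /\
  - th * x + 2 * th ^ 2 * m = - (1/8 * Rpower x e).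
Proof.
  intros Hx B m th.
  assert (HB : 0 < B) by apply Rpower_pos. assert (Hm : 0 < m) by apply Rpower_pos.
  assert (Em : m = B * Rpower x e) by (unfold m, B; rewrite <- Rpower_plus; f_equal; ring).
  assert (Ex2 : x * x = m * Rpower x e).
  { unfold m. rewrite <- Rpower_plus. replace (2 - e + e) with (1 + 1) by ring.
    rewrite Rpower_plus, Rpower_1 by lra. auto. }
  split; [|split; [rewrite Em; field; lra|]].
  { unfold Rdiv. rewrite <- Rpower_mult_distr by (try apply Rinv_0_lt_compat; lra).
    rewrite Rmult_comm. f_equal.
    - unfold Rpower. rewrite ln_Rinv by lra. f_equal. ring.
    - unfold B. rewrite Rpower_mult. f_equal. ring. }
  replace (- th * x + 2 * th ^ 2 * m) with (- (x * x) / (8 * m)) by (unfold th; field; lra).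
  rewrite Ex2. field. lra.
Qed.

(* Polynomial decay of the deviation probability: if p_k <= C k^(-sg) then
   P(|D| >= x) = O(x^(-(2-2e)(sg-1))) for every 0 < e <= 1/2.  Apply the union
   bound with B = x^(2-2e), m = x^(2-e) and th = x/(4m): the first term is
   O(B^(1-sg)), the other two are O(exp(-c x^e)). *)
Lemma deviation_power_decay (p : nat -> R) (kap C sg e : R) (P : nat -> R) :
  (forall k, 0 <= p k) -> (forall K, psum p K <= 1) ->
  (forall K, psum (fun k => INR k * p k) K <= kap) -> 0 <= kap -> kap < 1 ->
  1 < sg -> 0 < e <= 1/2 -> 0 <= C ->
  (forall k, (1 <= k)%nat -> p k <= C * Rpower (INR k) (- sg)) ->
  (forall n : nat, gw_prob p (fun t => Rabs (INR (tleaves t) - p 0%nat * INR (tsize t)) >= INR n) (P n)) ->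
  exists KP, 0 <= KP /\ forall n, (2 <= n)%nat ->
    0 <= P n <= KP * Rpower (INR n) (- ((2 - 2 * e) * (sg - 1))).
Proof.
  intros Hp H1 Hk Hk0 Hk1 Hsg He HC Hpk hP.
  set (A := (2 - 2 * e) * (sg - 1)).
  set (c1 := (1 - kap) * (1 - kap) / 8).
  assert (Hc1 : 0 < c1) by (unfold c1; apply Rdiv_lt_0_compat; nra).
  destruct (stretched_exp_le_power c1 e A Hc1 (proj1 He)) as [K2 [HK2 HK2b]].
  destruct (stretched_exp_le_power (1/8) e A ltac:(lra) (proj1 He)) as [K3 [HK3 HK3b]].
  set (K1 := C * Rpower 2 (sg - 1) / ((sg - 1) * (1 - kap))).
  assert (HK1 : 0 <= K1).
  { unfold K1. pose proof (Rpower_pos 2 (sg - 1)).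
    apply Rmult_le_pos; [nra | apply Rlt_le, Rinv_0_lt_compat; nra]. }
  exists (K1 + exp 1 * K2 + 2 * K3). split; [pose proof (exp_pos 1); nra|].
  intros n Hn. split; [apply (gw_prob_lower p _ _ [] (hP n)); constructor|].
  set (x := INR n).
  assert (Hx2 : 2 <= x) by (unfold x; replace 2 with (INR 2) by (simpl; lra); apply le_INR; auto).
  destruct (chosen_exponents x e kap sg ltac:(lra)) as [Ebig [Esize Ehoeff]]. fold A in Ebig.
  set (B := Rpower x (2 - 2 * e)) in *. set (m := Rpower x (2 - e)) in *. set (th := x / (4 * m)) in *.
  assert (HB : x <= B) by (rewrite <- (Rpower_1 x) at 1 by lra; apply Rle_Rpower; lra).
  assert (Hm : x <= m) by (rewrite <- (Rpower_1 x) at 1 by lra; apply Rle_Rpower; lra).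
  assert (Hth : 0 <= th <= 1/2).
  { unfold th. split; [apply Rmult_le_pos; [lra | apply Rlt_le, Rinv_0_lt_compat; lra]|].
    apply Rle_trans with (x / (4 * x)); [apply Rmult_le_compat_l; [lra | apply Rinv_le_contravar; lra]|].
    replace (x / (4 * x)) with (1/4) by (field; lra); lra. }
  apply (gw_prob_upper p _ _ _ (hP n)). intros L HN HF.
  eapply Rle_trans; [apply (deviation_tail_bound p kap B m th x _ Hp H1 Hk Hk0 Hk1 ltac:(lra) Hth
                              (big_degree_mass p C sg B HC Hsg ltac:(lra) Hpk) L HN HF)|].
  assert (T1 : C * (Rpower (B / 2) (1 - sg) / (sg - 1)) / (1 - kap) = K1 * Rpower x (- A))
    by (rewrite Ebig; unfold K1; field; split; lra).
  assert (T2 : exp ((1 - kap) / 4 / B - ((1 - kap) / 4 / B) * (1 - kap) / 2 * m)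
               <= exp 1 * (K2 * Rpower x (- A))).
  { eapply Rle_trans; [|apply Rmult_le_compat_l; [apply Rlt_le, exp_pos | apply HK2b; lra]].
    rewrite <- exp_plus. apply exp_le. rewrite Esize. fold c1.
    assert ((1 - kap) / 4 / B <= 1).
    { apply Rle_trans with ((1 - kap) / 4 / 1); [|lra].
      unfold Rdiv. apply Rmult_le_compat_l; [apply Rmult_le_pos; lra | apply Rinv_le_contravar; lra]. }
    lra. }
  assert (T3 : exp (- th * x + 2 * th ^ 2 * m) <= K3 * Rpower x (- A))
    by (rewrite Ehoeff; apply HK3b; lra).
  rewrite T1. nra.
Qed.

Lemma offspring_power_upper (p Lt : nat -> R) (beta e C : R) :
  (forall k, (1 <= k)%nat -> p k = Lt k * Rpower (INR k) (- beta)) ->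
  (forall k, (1 <= k)%nat -> Lt k <= C * Rpower (INR k) e) ->
  forall k, (1 <= k)%nat -> p k <= C * Rpower (INR k) (- (beta - e)).
Proof.
  intros Hp HL k Hk. rewrite Hp by auto. pose proof (Rpower_pos (INR k) (- beta)).
  apply Rle_trans with (C * Rpower (INR k) e * Rpower (INR k) (- beta)).
  - apply Rmult_le_compat_r; auto. lra.
  - rewrite Rmult_assoc, <- Rpower_plus. right; do 2 f_equal; ring.
Qed.

Lemma offspring_power_lower (p Lt : nat -> R) (beta e c : R) :
  (forall k, (1 <= k)%nat -> p k = Lt k * Rpower (INR k) (- beta)) ->
  (forall k, (1 <= k)%nat -> c * Rpower (INR k) (- e) <= Lt k) ->
  forall k, (1 <= k)%nat -> c * Rpower (INR k) (- (beta + e)) <= p k.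
Proof.
  intros Hp HL k Hk. rewrite Hp by auto. pose proof (Rpower_pos (INR k) (- beta)).
  apply Rle_trans with (c * Rpower (INR k) (- e) * Rpower (INR k) (- beta)).
  - rewrite Rmult_assoc, <- Rpower_plus. right; do 2 f_equal; ring.
  - apply Rmult_le_compat_r; auto. lra.
Qed.

Lemma size_biased_tail (p Lt : nat -> R) (beta : R) :
  (forall k, (1 <= k)%nat -> p k = Lt k * Rpower (INR k) (- beta)) ->
  forall n, (1 <= n)%nat -> INR n * p n = Lt n * Rpower (INR n) (1 - beta).
Proof.
  intros Hp n Hn. rewrite Hp by auto. replace (1 - beta) with (1 + - beta) by ring.
  rewrite Rpower_plus, Rpower_1 by (pose proof (INR_ge1 n Hn); lra). ring.
Qed.

(* A small loss e in the exponents keeps the upper decay rate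
   (2-2e)(beta-e-1) of the deviations above the lower rate beta + e. *)
Lemma exponent_loss (beta : R) : 2 < beta ->
  exists e, 0 < e <= 1/2 /\ beta + e < (2 - 2 * e) * (beta - e - 1).
Proof.
  intros hbeta. exists ((beta - 2) / (4 * beta + 2)).
  assert (Ee : (beta - 2) / (4 * beta + 2) * (4 * beta + 2) = beta - 2) by (field; lra).
  generalize dependent ((beta - 2) / (4 * beta + 2)). intros e Ee. split; [split|]; nra.
Qed.

Theorem mainTheorem6
  (p : nat -> R) (Lt : nat -> R) (beta kappa : R)
  (hp_nonneg : forall i : nat, 0 <= p i)
  (hp_sum : infinite_sum p 1)
  (hkappa : infinite_sum (fun i => INR i * p i) kappa)
  (hkappa_lt : kappa < 1)
  (hp0 : 0 < p 0%nat)
  (hbeta : 2 < beta)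
  (hL : slowly_varying_seq Lt)
  (hp_tail : forall i : nat, (1 <= i)%nat -> p i = Lt i * Rpower (INR i) (- beta))
  (P Q : nat -> R)
  (hP : forall n : nat,
      gw_prob p (fun t => Rabs (INR (tleaves t) - p 0%nat * INR (tsize t)) >= INR n) (P n))
  (hQ : forall n : nat, gw_prob p (fun t => (n <= tsize t)%nat) (Q n)) :
  little_o P (fun n => Lt n * Rpower (INR n) (1 - beta)) /\
  little_o P (fun n => INR n * p n) /\
  little_o P Q.
Proof.
  assert (H1 : forall K, psum p K <= 1) by (apply psum_le_inf; auto).
  assert (Hk : forall K, psum (fun k => INR k * p k) K <= kappa).
  { apply psum_le_inf; auto. intros; apply Rmult_le_pos; auto. apply pos_INR. }
  assert (Hk0 : 0 <= kappa) by (specialize (Hk 0%nat); unfold psum in Hk; simpl in Hk; lra).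
  destruct (exponent_loss beta hbeta) as [e [He Hgap]].
  destruct (potter_bounds Lt e hL (proj1 He)) as [C [c [HC [Hc Hpot]]]].
  destruct (deviation_power_decay p kappa C (beta - e) e P hp_nonneg H1 Hk Hk0 hkappa_lt
              ltac:(lra) He ltac:(lra)
              (offspring_power_upper p Lt beta e C hp_tail (fun k Hk => proj2 (Hpot k Hk))) hP)
    as [KP [HKP HPdecay]].
  assert (Hlow : forall n, (1 <= n)%nat -> c / 2 * Rpower (INR n) (- (beta + e)) <= p n / 2).
  { intros n Hn.
    pose proof (offspring_power_lower p Lt beta e c hp_tail (fun k Hk => proj1 (Hpot k Hk)) n Hn). lra. }
  assert (Hnpn : forall n, (1 <= n)%nat -> p n / 2 <= INR n * p n).
  { intros n Hn. pose proof (INR_ge1 n Hn). pose proof (hp_nonneg n). nra. }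
  split; [|split];
    apply (little_o_of_power_gap P _ (beta + e) ((2 - 2 * e) * (beta - e - 1)) KP (c / 2));
    auto; try lra; exists 2%nat; intros n Hn; (split; [apply HPdecay; auto|]);
    eapply Rle_trans; try apply (Hlow n ltac:(lia)).
  - rewrite <- (size_biased_tail p Lt beta hp_tail) by lia. apply Hnpn; lia.
  - apply Hnpn; lia.
  - apply (size_tail_lower p kappa Q); auto; lia.
Qed.
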